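(* Let $\mathcal{H}$ be a complex Hilbert space of $\mathbb{C}^n$-valued functions, with scalar product $\langle\cdot,\cdot\rangle$. Let $D$ be a selfadjoint operator on $\mathcal{H}$ with domain $\mathcal{D}_0$. Let $W_L,W_R$ be bounded selfadjoint operators on $\mathcal{H}$ such that: - $W_LW_R=W_RW_L$; - $W_L^{-1}$ and $W_R^{-1}$ exist and are bounded; - $W_RW_L^{-1}$ is selfadjoint; - $W_RW_L^{-1}\ge c\,\mathrm{id}$ for some $c>0$. Define $M=W_L\,D\,W_R$ with domain $\mathcal{D}_R:=W_R^{-1}\mathcal{D}_0$. Assume that complex conjugation $(C\Psi)(x)=\overline{\Psi(x)}$ satisfies $C\mathcal{D}_R=\mathcal{D}_R$ and $CMC=-M$. Let $\mathcal{H}_W$ denote $\mathcal{H}$ equipped with the scalar product $\langle\Phi,\Psi\rangle_W:=\langle\Phi,W\Psi\rangle$, where $W:=W_L^{-1}W_R$. Then $M$ is selfadjoint on $\mathcal{H}_W$ with dense domain $\mathcal{D}_R$.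
   Context: An operator $M=W_LDW_R$ satisfying these hypotheses is called a generalized Maxwell-type operator. *)

From mathcomp Require Import all_boot all_order all_algebra.
From mathcomp Require Import reals.
From mathcomp.real_closed Require Export complex.
Import GRing.Theory Num.Theory.
Set Implicit Arguments. Unset Strict Implicit. Unset Printing Implicit Defensive.
Local Open Scope ring_scope.
Local Open Scope complex_scope.

Section HilbertDefs.
Variable R : realType.
Variable V : lmodType R[i].
Implicit Types (ip : V -> V -> R[i]) (Dom : V -> Prop) (A : V -> V).

(* scalar product: conjugate-linear in the first, linear in the second argument *)
Definition inner_product ip :=
  [/\ (forall (a : R[i]) x y z, ip x (a *: y + z) = a * ip x y + ip x z),
      (forall x y, ip y x = (ip x y)^*),
      (forall x, 0 <= ip x x) &
      (forall x, ip x x = 0 -> x = 0)].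

Definition hnorm ip (x : V) : R := Num.sqrt (complex.Re (ip x x)).

Definition complete ip :=
  forall u : nat -> V,
    (forall eps : R, 0 < eps -> exists N : nat, forall m n : nat,
        (N <= m)%N -> (N <= n)%N -> hnorm ip (u m - u n) < eps) ->
    exists l : V, forall eps : R, 0 < eps -> exists N : nat, forall n : nat,
        (N <= n)%N -> hnorm ip (u n - l) < eps.

Definition hilbert_space ip := inner_product ip /\ complete ip.

Definition subspace Dom :=
  Dom 0 /\ forall (a : R[i]) x y, Dom x -> Dom y -> Dom (a *: x + y).

Definition linear_on Dom A :=
  subspace Dom /\
  forall (a : R[i]) x y, Dom x -> Dom y -> A (a *: x + y) = a *: A x + A y.

Definition dense ip Dom :=
  forall (x : V) (eps : R), 0 < eps -> exists y, Dom y /\ hnorm ip (x - y) < eps.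

(* A with domain Dom is selfadjoint w.r.t. ip: densely defined, linear, and
   its adjoint (graph {(psi, eta) | forall phi in Dom, <A phi, psi> = <phi, eta>})
   coincides with the graph of A. *)
Definition selfadjoint ip Dom A :=
  [/\ linear_on Dom A, dense ip Dom &
      forall psi eta : V,
        (forall phi, Dom phi -> ip (A phi) psi = ip phi eta) <->
        (Dom psi /\ eta = A psi)].

Definition bounded_op ip (B : V -> V) :=
  (forall (a : R[i]) x y, B (a *: x + y) = a *: B x + B y) /\
  exists K : R, forall x, hnorm ip (B x) <= K * hnorm ip x.

Definition bounded_selfadjoint ip (B : V -> V) :=
  bounded_op ip B /\ forall x y, ip (B x) y = ip x (B y).

(* abstraction of the complex conjugation (C Psi)(x) = conj (Psi x) *)
Definition conjugation ip (C : V -> V) :=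
  [/\ (forall (a : R[i]) x y, C (a *: x + y) = a^* *: C x + C y),
      (forall x, C (C x) = x) &
      (forall x y, ip (C x) (C y) = (ip x y)^*)].

Definition weighted_ip ip (W : V -> V) : V -> V -> R[i] :=
  fun x y => ip x (W y).

End HilbertDefs.

(* With W := WL^-1 WR, the weighted scalar product satisfies
   <WL D WR phi, psi>_W = <D (WR phi), WR psi> and <phi, eta>_W = <WR phi, WL^-1 eta>,
   so the substitution u = WR phi turns the adjoint equation of M = WL D WR in H_W
   into the adjoint equation of D in H; selfadjointness of D then identifies the
   adjoint of M with M.  Density of D_R = WR^-1 D_0 follows because WR^-1 is bounded
   and the W-norm is dominated by the original norm. *)

From mathcomp Require Import all_boot all_order all_algebra.
From mathcomp Require Import reals.
From mathcomp.real_closed Require Import complex.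
From mathcomp Require Import lra.
Import Order.TTheory GRing.Theory Num.Theory.
Set Implicit Arguments. Unset Strict Implicit. Unset Printing Implicit Defensive.
Local Open Scope ring_scope.
Local Open Scope complex_scope.

Lemma ReB (R : rcfType) (x y : R[i]) : complex.Re (x - y) = complex.Re x - complex.Re y.
Proof. by case: x; case: y. Qed.

Lemma ReJ (R : rcfType) (x : R[i]) : complex.Re x^* = complex.Re x.
Proof. by case: x. Qed.

Lemma Re_ge0 (R : rcfType) (x : R[i]) : 0 <= x -> 0 <= complex.Re x.
Proof. by rewrite lecE => /andP[]. Qed.

Lemma mulr_lt_of_lt_divDr1 (R : realFieldType) (K h eps : R) :
  0 <= K -> 0 <= h -> h < eps / (K + 1) -> K * h < eps.
Proof. by move=> K0 h0; rewrite ltr_pdivlMr ?ltr_wpDl //; nra. Qed.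

Section LinearMaps.
Variables (R : realType) (V : lmodType R[i]).

Definition linear_map (f : V -> V) :=
  forall (a : R[i]) x y, f (a *: x + y) = a *: f x + f y.

Lemma linear_map0 f : linear_map f -> f 0 = 0.
Proof.
move=> f_lin; have := f_lin 1 0 0; rewrite !scale1r addr0 => f00.
by apply: (addrI (f 0)); rewrite addr0 -f00.
Qed.

Lemma linear_mapB f : linear_map f -> forall x y, f (x - y) = f x - f y.
Proof.
move=> f_lin x y.
have fN : f (- y) = - f y.
  by have := f_lin (-1) y 0; rewrite !addr0 linear_map0 // addr0 !scaleN1r.
by have := f_lin 1 x (- y); rewrite !scale1r fN.
Qed.

Lemma subspace_preimage (Dom : V -> Prop) B :
  subspace Dom -> linear_map B -> subspace (fun x => Dom (B x)).
Proof.
move=> [Dom0 DomD] B_lin; split; first by rewrite linear_map0.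
by move=> a x y Dx Dy; rewrite B_lin; apply: DomD.
Qed.

Lemma linear_on_sandwich (Dom : V -> Prop) A L B :
  linear_on Dom A -> linear_map L -> linear_map B ->
  linear_on (fun x => Dom (B x)) (fun x => L (A (B x))).
Proof.
move=> [Dom_sub A_lin] L_lin B_lin.
split; first exact: subspace_preimage.
by move=> a x y Dx Dy; rewrite B_lin A_lin.
Qed.

End LinearMaps.

Section InnerProduct.
Variables (R : realType) (V : lmodType R[i]) (ip : V -> V -> R[i]).
Hypothesis ip_inner : inner_product ip.

Lemma ipr0 x : ip x 0 = 0.
Proof.
case: ip_inner => ipD _ _ _; have := ipD 1 x 0 0; rewrite scale1r addr0 mul1r.
by move=> ip00; apply: (addrI (ip x 0)); rewrite addr0 -ip00.
Qed.

Lemma iprB x y z : ip x (y - z) = ip x y - ip x z.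
Proof.
case: ip_inner => ipD _ _ _.
have ipN : ip x (- z) = - ip x z.
  by have := ipD (-1) x z 0; rewrite !addr0 ipr0 addr0 scaleN1r mulN1r.
by have := ipD 1 x y (- z); rewrite scale1r mul1r ipN.
Qed.

Lemma iplB x y z : ip (y - z) x = ip y x - ip z x.
Proof.
case: ip_inner => _ ipC _ _.
by rewrite (ipC x (y - z)) (ipC x y) (ipC x z) iprB rmorphB.
Qed.

Lemma Re_ipC x y : complex.Re (ip y x) = complex.Re (ip x y).
Proof. by case: ip_inner => _ ipC _ _; rewrite ipC ReJ. Qed.

Lemma Re_ipxx_ge0 x : 0 <= complex.Re (ip x x).
Proof. by case: ip_inner => _ _ ip_ge0 _; apply: Re_ge0. Qed.

Lemma hnorm_sqr x : hnorm ip x ^+ 2 = complex.Re (ip x x).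
Proof. by rewrite sqr_sqrtr // Re_ipxx_ge0. Qed.

(* Expand 0 <= Re <x - y, x - y>. *)
Lemma Re_ip_le x y :
  2 * complex.Re (ip x y) <= complex.Re (ip x x) + complex.Re (ip y y).
Proof.
have := Re_ipxx_ge0 (x - y).
rewrite iplB !iprB !ReB (Re_ipC x y); lra.
Qed.

Lemma bounded_op_le B : bounded_op ip B ->
  exists2 K, 0 <= K & forall x, hnorm ip (B x) <= K * hnorm ip x.
Proof.
case=> _ [K BK]; exists `|K| => // x.
by apply: le_trans (BK x) _; rewrite ler_wpM2r ?sqrtr_ge0 ?ler_norm.
Qed.

Lemma hnorm_weighted_le W K :
  (forall x, hnorm ip (W x) <= K * hnorm ip x) ->
  forall x, hnorm (weighted_ip ip W) x <= Num.sqrt (1 + K ^+ 2) * hnorm ip x.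
Proof.
move=> WK x; rewrite /hnorm /weighted_ip -sqrtrM ?addr_ge0 ?sqr_ge0 //.
apply: ler_wsqrtr.
have WxK : complex.Re (ip (W x) (W x)) <= K ^+ 2 * complex.Re (ip x x).
  have WKx := WK x; have Wx0 := sqrtr_ge0 (complex.Re (ip (W x) (W x))).
  by rewrite -!hnorm_sqr -exprMn ler_pXn2r ?nnegrE //; apply: le_trans WKx.
have := Re_ip_le x (W x); have := Re_ipxx_ge0 x; have := Re_ipxx_ge0 (W x).
lra.
Qed.

End InnerProduct.

Section Density.
Variables (R : realType) (V : lmodType R[i]).

Lemma dense_le (ip1 ip2 : V -> V -> R[i]) (Dom : V -> Prop) K :
  0 <= K -> (forall z, hnorm ip2 z <= K * hnorm ip1 z) ->
  dense ip1 Dom -> dense ip2 Dom.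
Proof.
move=> K0 ipK Dom_dense x eps eps0.
have [|y [Dy xy]] := Dom_dense x (eps / (K + 1)); first by rewrite divr_gt0 ?ltr_wpDl.
exists y; split=> //; apply: le_lt_trans (ipK _) _.
exact: mulr_lt_of_lt_divDr1 (sqrtr_ge0 _) xy.
Qed.

Lemma dense_preimage (ip : V -> V -> R[i]) (Dom : V -> Prop) B Bi :
  cancel B Bi -> cancel Bi B -> bounded_op ip Bi ->
  dense ip Dom -> dense ip (fun x => Dom (B x)).
Proof.
move=> BK BiK Bi_bounded Dom_dense x eps eps0.
have [Bi_lin _] := Bi_bounded; have [K K0 BiK_le] := bounded_op_le Bi_bounded.
have [|y [Dy xy]] := Dom_dense (B x) (eps / (K + 1)); first by rewrite divr_gt0 ?ltr_wpDl.
exists (Bi y); split; first by rewrite BiK.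
rewrite -{1}(BK x) -linear_mapB //; apply: le_lt_trans (BiK_le _) _.
exact: mulr_lt_of_lt_divDr1 (sqrtr_ge0 _) xy.
Qed.

End Density.

Section Sandwich.
Variables (R : realType) (V : lmodType R[i]) (ip : V -> V -> R[i]).
Variables (WL WR WLi WRi : V -> V).
Hypotheses (WL_sym : forall x y, ip (WL x) y = ip x (WL y))
           (WR_sym : forall x y, ip (WR x) y = ip x (WR y)).
Hypothesis WLWR_comm : forall x, WL (WR x) = WR (WL x).
Hypotheses (WLK : cancel WL WLi) (WLiK : cancel WLi WL).
Hypotheses (WRK : cancel WR WRi) (WRiK : cancel WRi WR).

Let W x := WLi (WR x).

Lemma WLi_WR_comm x : WLi (WR x) = WR (WLi x).
Proof. by apply: (can_inj WLK); rewrite WLiK WLWR_comm WLiK. Qed.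

Lemma ip_WL_W x y : ip (WL x) (W y) = ip x (WR y).
Proof. by rewrite WL_sym WLiK. Qed.

Lemma ip_W x y : ip x (W y) = ip (WR x) (WLi y).
Proof. by rewrite /W WR_sym WLi_WR_comm. Qed.

Lemma adjoint_sandwich (Dom : V -> Prop) A psi eta :
  (forall phi, Dom (WR phi) -> weighted_ip ip W (WL (A (WR phi))) psi = weighted_ip ip W phi eta)
  <-> (forall u, Dom u -> ip (A u) (WR psi) = ip u (WLi eta)).
Proof.
rewrite /weighted_ip; split=> [adj u Du | adj phi Dphi].
- by have := adj (WRi u); rewrite WRiK ip_WL_W ip_W WRiK => ->.
- by rewrite ip_WL_W ip_W adj.
Qed.

Hypothesis ip_inner : inner_product ip.
Hypotheses (WL_lin : linear_map WL) (WR_bounded : bounded_op ip WR).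
Hypotheses (WLi_bounded : bounded_op ip WLi) (WRi_bounded : bounded_op ip WRi).

Lemma dense_weighted (Dom : V -> Prop) : dense ip Dom -> dense (weighted_ip ip W) Dom.
Proof.
have [KL KL0 WLiKL] := bounded_op_le WLi_bounded.
have [KR KR0 WRKR] := bounded_op_le WR_bounded.
have WKLKR x : hnorm ip (W x) <= KL * KR * hnorm ip x.
  by rewrite -mulrA; apply: le_trans (WLiKL _) _; rewrite ler_wpM2l.
apply: dense_le (hnorm_weighted_le ip_inner WKLKR).
exact: sqrtr_ge0.
Qed.

Theorem selfadjoint_sandwich (Dom : V -> Prop) A :
  selfadjoint ip Dom A ->
  selfadjoint (weighted_ip ip W) (fun x => Dom (WR x)) (fun x => WL (A (WR x))).
Proof.
have [WR_lin _] := WR_bounded.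
move=> [A_lin Dom_dense A_adj]; split.
- exact: linear_on_sandwich A_lin WL_lin WR_lin.
- exact/dense_weighted/(dense_preimage WRK WRiK).
- move=> psi eta; rewrite adjoint_sandwich A_adj.
  by split=> -[Dpsi eq_eta]; split=> //; rewrite ?eq_eta ?WLK // -eq_eta WLiK.
Qed.

End Sandwich.

Theorem proposition6p2 (R : realType) (V : lmodType R[i]) (ip : V -> V -> R[i])
  (D0 : V -> Prop) (D : V -> V) (WL WR WLi WRi : V -> V) (C : V -> V) (c : R) :
  hilbert_space ip ->
  selfadjoint ip D0 D ->
  bounded_selfadjoint ip WL ->
  bounded_selfadjoint ip WR ->
  (forall x, WL (WR x) = WR (WL x)) ->
  cancel WL WLi -> cancel WLi WL -> bounded_op ip WLi ->
  cancel WR WRi -> cancel WRi WR -> bounded_op ip WRi ->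
  (forall x y, ip (WR (WLi x)) y = ip x (WR (WLi y))) ->
  0 < c ->
  (forall x, c%:C * ip x x <= ip x (WR (WLi x))) ->
  conjugation ip C ->
  (forall y, (exists x, D0 (WR x) /\ C x = y) <-> D0 (WR y)) ->
  (forall x, D0 (WR x) -> C (WL (D (WR (C x)))) = - WL (D (WR x))) ->
  selfadjoint (weighted_ip ip (fun y => WLi (WR y)))
              (fun x => D0 (WR x)) (fun x => WL (D (WR x))).
Proof.
move=> [ip_inner _] D_sa [[WL_lin _] WL_sym] [WR_bounded WR_sym] WLWR_comm
  WLK WLiK WLi_bounded WRK WRiK WRi_bounded _ _ _ _ _ _.
exact: (selfadjoint_sandwich WL_sym WR_sym WLWR_comm WLK WLiK WRK WRiK
  ip_inner WL_lin WR_bounded WLi_bounded WRi_bounded D_sa).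
Qed.
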